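(* Let $E$ be a $KB$-space, let $\mathfrak{B}$ be a Boolean subalgebra of $\mathfrak{B}(E)$, let $\xi$ be a forward filtration in $\mathfrak{B}$ and let $T$ be a $\mathfrak{B}$-Volterra operator on $E$. Then $\hat{T}_{\xi}\colon\mathcal{M}_0(\xi)\to\mathcal{M}_0(\xi)$ induces a norm continuous operator $\hat{T}_{\xi}\colon\mathcal{M}_b(\xi)\to\mathcal{M}_b(\xi)$, and with $\iota_{\xi}\colon E\to\mathcal{M}_b(\xi)$, $\iota_\xi(x)=(\xi_nx)_{n\ge1}$, one has $\iota_\xi\circ T=\hat{T}_\xi\circ\iota_\xi$ and $\mathbf{s}\circ\hat{T}_\xi=\hat{T}_{L(\xi)}\circ\mathbf{s}$ as maps $\mathcal{M}_b(\xi)\to\mathcal{M}_b(L(\xi))$; all maps involved are norm continuous operators between Banach lattices.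
   Context: A $KB$-space is a Banach lattice in which every increasing norm bounded sequence is norm convergent (its norm is order continuous). $\mathfrak{B}(E)$ is the Boolean algebra of all order projections on $E$ ($\pi\le\rho$ iff $\pi\rho=\pi$, $\pi^*=I_E-\pi$, zero $\mathbf 0$, unit $\mathbf 1=I_E$). A positive operator $T$ is $\mathfrak{B}$-Volterra if for all $\pi\in\mathfrak{B}$, $x,y\in E$, $\pi x=\pi y$ implies $\pi Tx=\pi Ty$. A forward filtration in $\mathfrak{B}$ is a map $\xi\colon\{0,1,\dots,\infty\}\to\mathfrak{B}$ with $\xi_n\le\xi_{n+1}$, $\xi_0=\mathbf 0$, $\xi_\infty=\mathbf 1$; $L(\xi)_0=\xi_0$, $L(\xi)_n=\xi_{n+1}$ for $n\ge1$. $\mathcal{M}_0(\xi)$ is the set of sequences $(x_n)_{n\ge1}$ in $E$ with $\xi_nx_m=x_n$ for $m\ge n\ge1$; $\mathcal{M}_b(\xi)$ is the subset with $\sup_n\|x_n\|<\infty$, with coordinatewise order and norm $\sup_n\|x_n\|$. $\hat{T}_\xi((x_n))=(\xi_nTx_n)$, and $\mathbf{s}((x_n)_{n\ge1})=(x_{n+1})_{n\ge1}$. *)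

From HB Require Import structures.
From mathcomp Require Import all_boot all_order all_algebra.
From mathcomp Require Import all_classical all_reals all_analysis.
Set Implicit Arguments. Unset Strict Implicit. Unset Printing Implicit Defensive.
Import Order.TTheory GRing.Theory Num.Theory.
Import numFieldNormedType.Exports.
Local Open Scope classical_set_scope.
Local Open Scope ring_scope.

Section BL.
Variables (R : realType) (V : completeNormedModType R).
Variables (le : V -> V -> Prop) (join : V -> V -> V).

Definition vector_lattice : Prop :=
  (forall x, le x x) /\
  (forall x y, le x y -> le y x -> x = y) /\
  (forall x y z, le x y -> le y z -> le x z) /\
  (forall x y z, le x y -> le (x + z) (y + z)) /\
  (forall (a : R) x y, 0 <= a -> le x y -> le (a *: x) (a *: y)) /\
  (forall x y, [/\ le x (join x y), le y (join x y) &
                  forall z, le x z -> le y z -> le (join x y) z]).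

Definition absv (x : V) : V := join x (- x).

(** Banach lattice: complete (the type is a complete normed module) vector
    lattice with a lattice norm. *)
Definition banach_lattice : Prop :=
  vector_lattice /\ forall x y, le (absv x) (absv y) -> `|x| <= `|y|.

Definition KB_space : Prop :=
  banach_lattice /\
  forall u : nat -> V, (forall n, le (u n) (u n.+1)) ->
    (exists M : R, forall n, `|u n| <= M) -> exists l : V, u @ \oo --> l.

Definition linear_op (P : V -> V) : Prop :=
  forall (a : R) x y, P (a *: x + y) = a *: P x + P y.

Definition order_projection (P : V -> V) : Prop :=
  [/\ linear_op P, (forall x, P (P x) = P x) &
      forall x, le 0 x -> le 0 (P x) /\ le (P x) x].

Definition proj0 : V -> V := fun _ => 0.
Definition proj1 : V -> V := id.
Definition projC (P : V -> V) : V -> V := fun x => x - P x.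

(** Boolean subalgebra of B(E): meet is composition, complement is I - P. *)
Definition boolean_subalgebra (B : set (V -> V)) : Prop :=
  [/\ (forall P, B P -> order_projection P), B proj0, B proj1,
      (forall P Q, B P -> B Q -> B (P \o Q)) &
      (forall P, B P -> B (projC P))].

Definition positive_op (T : V -> V) : Prop :=
  linear_op T /\ forall x, le 0 x -> le 0 (T x).

Definition volterra (B : set (V -> V)) (T : V -> V) : Prop :=
  positive_op T /\
  forall P x y, B P -> P x = P y -> P (T x) = P (T y).

(** Forward filtration xi_0, xi_1, ... (xi_oo = 1 is implicit);
    xi_n <= xi_(n+1) means xi_n \o xi_(n+1) = xi_n. *)
Definition forward_filtration (B : set (V -> V)) (xi : nat -> V -> V) : Prop :=
  [/\ forall n, B (xi n), xi 0%N = proj0 & forall n, xi n \o xi n.+1 = xi n].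

Definition Lfilt (xi : nat -> V -> V) : nat -> V -> V :=
  fun n => if n == 0%N then xi 0%N else xi n.+1.

(** Sequences (x_n)_{n>=1} are encoded as x : nat -> V with x k = x_(k+1). *)
Definition M0 (xi : nat -> V -> V) (x : nat -> V) : Prop :=
  forall n m, (n <= m)%N -> xi n.+1 (x m) = x n.

Definition Mb (xi : nat -> V -> V) (x : nat -> V) : Prop :=
  M0 xi x /\ exists M : R, forall n, `|x n| <= M.

Definition That (xi : nat -> V -> V) (T : V -> V) (x : nat -> V) : nat -> V :=
  fun k => xi k.+1 (T (x k)).

Definition iota_xi (xi : nat -> V -> V) (v : V) : nat -> V := fun k => xi k.+1 v.

Definition shift_s (x : nat -> V) : nat -> V := fun k => x k.+1.

Definition seq_continuous (A : set (nat -> V)) (F : (nat -> V) -> nat -> V) :=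
  forall x, A x -> forall e : R, 0 < e -> exists2 d : R, 0 < d &
    forall y, A y -> (forall n, `|x n - y n| <= d) ->
      forall n, `|F x n - F y n| <= e.

Definition E_to_seq_continuous (F : V -> nat -> V) :=
  forall x (e : R), 0 < e -> exists2 d : R, 0 < d &
    forall y, `|x - y| <= d -> forall n, `|F x n - F y n| <= e.

(** A set of sequences is a Banach lattice for the coordinatewise order and
    sup norm: closed under the vector lattice operations and complete. *)
Definition seq_banach_lattice (A : set (nat -> V)) : Prop :=
  [/\ (forall (a : R) x y, A x -> A y -> A (fun n => a *: x n + y n)),
      (forall x y, A x -> A y -> A (fun n => join (x n) (y n))) &
      (forall u : nat -> nat -> V, (forall k, A (u k)) ->
        (forall e : R, 0 < e -> exists N, forall i j, (N <= i)%N -> (N <= j)%N ->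
            forall n, `|u i n - u j n| <= e) ->
        exists2 x, A x & forall e : R, 0 < e -> exists N, forall i, (N <= i)%N ->
            forall n, `|u i n - x n| <= e)].
End BL.
Arguments shift_s {R V} x _.
Arguments proj0 {R V} _.
Arguments proj1 {R V} _.

From HB Require Import structures.
From mathcomp Require Import all_boot all_order all_algebra.
From mathcomp Require Import all_classical all_reals all_analysis.
Import Order.TTheory GRing.Theory Num.Theory.
Import numFieldNormedType.Exports.
Local Open Scope classical_set_scope.
Local Open Scope ring_scope.
Set Implicit Arguments. Unset Strict Implicit. Unset Printing Implicit Defensive.

(* A positive
   operator [T] on a Banach lattice is bounded: otherwise there are [y_n >= 0]
   with [|y_n| <= 2^-n] and [|T y_n| >= n], and [l = sum_n y_n] dominates every
   [y_n], so [|T l| >= n] for all [n].  Order projections commute with [join]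
   and are contractions, so [That xi T] is bounded coordinatewise by the bound
   of [T].  The Volterra property for the projections [xi_(n+1)] is exactly what
   makes [That xi T] respect the compatibility condition of [M0 xi] and commute
   with [iota_xi]; completeness of [Mb xi] holds because compatibility passes to
   uniform limits, the projections being continuous. *)

Section BanachLattice.
Variables (R : realType) (V : completeNormedModType R).
Variables (le : V -> V -> Prop) (join : V -> V -> V).
Hypothesis VL : vector_lattice le join.

Lemma vl_refl x : le x x. Proof. by case: VL => H _; apply: H. Qed.

Lemma vl_anti x y : le x y -> le y x -> x = y.
Proof. by case: VL => _ [H _]; apply: H. Qed.

Lemma vl_trans y x z : le x y -> le y z -> le x z.
Proof. by case: VL => _ [_ [H _]]; apply: H. Qed.

Lemma vl_addr z x y : le x y -> le (x + z) (y + z).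
Proof. by case: VL => _ [_ [_ [H _]]]; apply: H. Qed.

Lemma vl_scaler (a : R) x y : 0 <= a -> le x y -> le (a *: x) (a *: y).
Proof. by case: VL => _ [_ [_ [_ [H _]]]]; apply: H. Qed.

Lemma vl_joinl x y : le x (join x y).
Proof. by case: VL => _ [_ [_ [_ [_ H]]]]; case: (H x y). Qed.

Lemma vl_joinr x y : le y (join x y).
Proof. by case: VL => _ [_ [_ [_ [_ H]]]]; case: (H x y). Qed.

Lemma vl_join_lub x y z : le x z -> le y z -> le (join x y) z.
Proof. by case: VL => _ [_ [_ [_ [_ H]]]]; case: (H x y) => _ _; apply. Qed.

Lemma vl_addl z x y : le x y -> le (z + x) (z + y).
Proof. by rewrite ![z + _]addrC; apply: vl_addr. Qed.

Lemma vl_add a b c d : le a b -> le c d -> le (a + c) (b + d).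
Proof. by move=> ab cd; apply: (vl_trans (vl_addr c ab)); apply: vl_addl. Qed.

Lemma vl_subr_ge0 x y : le 0 (y - x) <-> le x y.
Proof.
split=> [|xy]; first by move/(vl_addr x); rewrite add0r subrK.
by have := vl_addr (- x) xy; rewrite subrr.
Qed.

Lemma vl_le_subr x y c : le (x + c) y -> le x (y - c).
Proof. by move/(vl_addr (- c)); rewrite addrK. Qed.

Lemma vl_oppr x y : le x y -> le (- y) (- x).
Proof.
move=> /(vl_addr (- x - y)).
by rewrite addrA subrr add0r addrC subrK.
Qed.

Lemma vl_joinC x y : join x y = join y x.
Proof. by apply: vl_anti; apply: vl_join_lub; auto using vl_joinl, vl_joinr. Qed.

Lemma vl_joinDl a b c : join a b + c = join (a + c) (b + c).
Proof.
apply: vl_anti; last first.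
  by apply: vl_join_lub; apply: vl_addr; [apply: vl_joinl | apply: vl_joinr].
have h : le (join a b) (join (a + c) (b + c) - c).
  by apply: vl_join_lub; apply: vl_le_subr; [apply: vl_joinl | apply: vl_joinr].
by have := vl_addr c h; rewrite subrK.
Qed.

Lemma vl_join_monol b a a' : le a a' -> le (join a b) (join a' b).
Proof.
move=> aa'; apply: vl_join_lub; last exact: vl_joinr.
exact: vl_trans aa' (vl_joinl _ _).
Qed.

Lemma vl_chain_mono (u : nat -> V) : (forall n, le (u n) (u n.+1)) ->
  forall n m, (n <= m)%N -> le (u n) (u m).
Proof.
move=> u_incr n; elim=> [|m IH]; first by rewrite leqn0 => /eqP ->; apply: vl_refl.
rewrite leq_eqVlt => /orP [/eqP -> | /IH nu]; first exact: vl_refl.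
exact: vl_trans nu (u_incr m).
Qed.

Local Notation absv := (absv join).

Lemma absv_ge0 x : le 0 (absv x).
Proof.
have : le (x + - x) (absv x + absv x) by apply: vl_add; [apply: vl_joinl | apply: vl_joinr].
have half_ge0 : (0 : R) <= 2^-1 by rewrite invr_ge0.
rewrite subrr -mulr2n -scaler_nat => /(vl_scaler half_ge0).
by rewrite scaler0 scalerA mulVf ?pnatr_eq0 // scale1r.
Qed.

Lemma absv_id x : le 0 x -> absv x = x.
Proof.
move=> x0; apply: vl_anti; last exact: vl_joinl.
apply: vl_join_lub; first exact: vl_refl.
by apply: (vl_trans (y := 0)) => //; rewrite -oppr0; apply: vl_oppr.
Qed.

Lemma absv_idem x : absv (absv x) = absv x.
Proof. exact/absv_id/absv_ge0. Qed.

Lemma linear_opD (P : V -> V) x y : linear_op P -> P (x + y) = P x + P y.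
Proof. by move=> Plin; rewrite -[x in LHS]scale1r Plin scale1r. Qed.

Lemma linear_op0 (P : V -> V) : linear_op P -> P 0 = 0.
Proof. by move=> Plin; apply/(@addIr _ (P 0)); rewrite -linear_opD // !add0r. Qed.

Lemma linear_opZ (P : V -> V) a x : linear_op P -> P (a *: x) = a *: P x.
Proof. by move=> Plin; rewrite -[a *: x]addr0 Plin linear_op0 // addr0. Qed.

Lemma linear_opN (P : V -> V) x : linear_op P -> P (- x) = - P x.
Proof. by move=> Plin; rewrite -scaleN1r linear_opZ // scaleN1r. Qed.

Lemma linear_opB (P : V -> V) x y : linear_op P -> P (x - y) = P x - P y.
Proof. by move=> Plin; rewrite linear_opD // linear_opN. Qed.

Lemma positive_op_mono (P : V -> V) x y : positive_op le P -> le x y -> le (P x) (P y).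
Proof. by case=> Plin Ppos /vl_subr_ge0 /Ppos; rewrite linear_opB // => /vl_subr_ge0. Qed.

Lemma positive_op_absv (P : V -> V) x :
  positive_op le P -> le (absv (P x)) (P (absv x)).
Proof.
move=> Ppos; have [Plin _] := Ppos.
apply: vl_join_lub; first exact/positive_op_mono/vl_joinl.
by rewrite -linear_opN //; apply/positive_op_mono/vl_joinr.
Qed.

Lemma order_projection_positive (P : V -> V) : order_projection le P -> positive_op le P.
Proof. by case=> Plin _ H; split => // x /H []. Qed.

Lemma order_projection_le (P : V -> V) x : order_projection le P -> le 0 x -> le (P x) x.
Proof. by case=> _ _ H /H []. Qed.

Lemma order_projection_absv (P : V -> V) x :
  order_projection le P -> le (absv (P x)) (absv x).
Proof.
move=> Pproj; apply: vl_trans (positive_op_absv x (order_projection_positive Pproj)) _.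
exact/order_projection_le/absv_ge0.
Qed.

Definition pos_part x := join x 0.
Definition neg_part x := join (- x) 0.

Lemma pos_partB_neg_part x : pos_part x - neg_part x = x.
Proof.
have <- : pos_part x - x = neg_part x by rewrite /pos_part vl_joinDl subrr add0r vl_joinC.
by rewrite opprB addrC subrK.
Qed.

Definition disjoint_pos u v := forall z, le 0 z -> le z u -> le z v -> z = 0.

Lemma disjoint_pos_parts x : disjoint_pos (pos_part x) (neg_part x).
Proof.
move=> z z0 zp zn.
have zxp : le (z + x) (pos_part x).
  by have := vl_addr x zn; rewrite /neg_part vl_joinDl addNr add0r vl_joinC.
have pz : le (pos_part x) (pos_part x - z).
  apply: vl_join_lub; first by apply: vl_le_subr; rewrite addrC.
  exact/vl_subr_ge0.
apply: vl_anti => //.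
by move: pz => /vl_subr_ge0; rewrite addrAC subrr add0r => /vl_oppr; rewrite opprK oppr0.
Qed.

Lemma pos_part_subr_disjoint u v : le 0 u -> le 0 v -> disjoint_pos u v ->
  pos_part (u - v) = u.
Proof.
move=> u0 v0 uv; set w := pos_part (u - v).
have le_subr t : le 0 t -> le (u - t) u.
  by move=> t0; have := vl_addl (u - t) t0; rewrite addr0 subrK.
have wu : le w u by apply: vl_join_lub => //; apply: le_subr.
have uwv : le (u - w) v.
  have := vl_addr v (vl_joinl (u - v) 0); rewrite subrK -/w => /(vl_addr (- w)).
  by rewrite (addrC w) addrK.
have /subr0_eq -> // := uv _ (proj2 (vl_subr_ge0 _ _) wu) (le_subr _ (vl_joinr _ _)) uwv.
Qed.

Lemma order_projection_pos_part (P : V -> V) x :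
  order_projection le P -> P (pos_part x) = pos_part (P x).
Proof.
move=> Pproj; have [Plin _ _] := Pproj; have [_ Ppos] := order_projection_positive Pproj.
have Pdisj : disjoint_pos (P (pos_part x)) (P (neg_part x)).
  move=> z z0 zp zn; apply: (disjoint_pos_parts z0).
    by apply: vl_trans zp (order_projection_le Pproj (vl_joinr _ _)).
  by apply: vl_trans zn (order_projection_le Pproj (vl_joinr _ _)).
rewrite -{2}(pos_partB_neg_part x) linear_opB // pos_part_subr_disjoint //.
  exact/Ppos/vl_joinr.
exact/Ppos/vl_joinr.
Qed.

Lemma order_projection_join (P : V -> V) a b :
  order_projection le P -> P (join a b) = join (P a) (P b).
Proof.
move=> Pproj; have [Plin _ _] := Pproj.
have joinE c d : join c d = pos_part (c - d) + d.
  by rewrite /pos_part vl_joinDl subrK add0r.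
by rewrite joinE linear_opD // order_projection_pos_part // linear_opB // -joinE.
Qed.

Hypothesis lattice_norm : forall x y, le (absv x) (absv y) -> `|x| <= `|y|.

Lemma norm_le_absv x y : le (absv x) y -> `|x| <= `|y|.
Proof.
move=> xy; have y0 := vl_trans (absv_ge0 x) xy.
by apply: lattice_norm; rewrite (absv_id y0).
Qed.

Lemma norm_le_pos a b : le 0 a -> le a b -> `|a| <= `|b|.
Proof. by move=> a0 ab; apply: norm_le_absv; rewrite absv_id. Qed.

Lemma norm_absv x : `|absv x| = `|x|.
Proof. by apply/eqP; rewrite eq_le !lattice_norm // absv_idem; apply: vl_refl. Qed.

Lemma order_projection_norm (P : V -> V) x : order_projection le P -> `|P x| <= `|x|.
Proof.
by move=> Pproj; rewrite -[`|x|]norm_absv; apply/norm_le_absv/order_projection_absv.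
Qed.

Lemma norm_join a b : `|join a b| <= `|a| + `|b|.
Proof.
have le_sum c d : le (absv c) (absv c + absv d).
  by have := vl_addl (absv c) (absv_ge0 d); rewrite addr0.
have ja : le (absv (join a b)) (absv a + absv b).
  apply: vl_join_lub; first apply: vl_join_lub.
  - exact: vl_trans (vl_joinl _ _) (le_sum _ _).
  - by rewrite addrC; apply: vl_trans (vl_joinl _ _) (le_sum _ _).
  - exact: vl_trans (vl_oppr (vl_joinl a b)) (vl_trans (vl_joinr _ _) (le_sum _ _)).
by apply: le_trans (norm_le_absv ja) _; apply: le_trans (ler_normD _ _) _; rewrite !norm_absv.
Qed.

(* Once [u n >= c], [(l - c)^- <= |u n - l|], so [(l - c)^-] has norm zero. *)
Lemma lower_bound_cvg (u : nat -> V) (l c : V) N : u @ \oo --> l ->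
  (forall n, (N <= n)%N -> le c (u n)) -> le c l.
Proof.
move=> /cvgrPdist_le ul cu; set w := l - c.
suff : neg_part w = 0.
  by move=> w0; apply/vl_subr_ge0; rewrite -/w -(pos_partB_neg_part w) w0 subr0; apply: vl_joinr.
apply/normr0_eq0/eqP; rewrite eq_le normr_ge0 andbT; apply/ler_addgt0Pr => e e0.
rewrite add0r; have [M _ HM] := ul e e0; set n := maxn N M.
have unc : le 0 (u n - c) by apply/vl_subr_ge0/cu; rewrite leq_maxl.
have : le (neg_part w) (absv (u n - l)).
  apply: vl_trans (vl_join_monol 0 (_ : le (- w) (u n - l))) _.
    by have := vl_addr (- w) unc; rewrite add0r /w opprB addrA subrK.
  exact: vl_join_lub (vl_joinl _ _) (absv_ge0 _).
move=> /(norm_le_pos (vl_joinr _ _)); rewrite norm_absv distrC => /le_trans; apply.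
by apply: HM; rewrite /= leq_maxr.
Qed.

Definition bounded_op (T : V -> V) := exists2 C : R, 0 < C & forall x, `|T x| <= C * `|x|.

Lemma unbounded_positive_op_witness (T : V -> V) (r q : R) :
  positive_op le T -> ~ bounded_op T -> 0 < q ->
  exists y, [/\ le 0 y, `|y| <= q & r <= `|T y|].
Proof.
move=> Tpos Tunb q0; have [Tlin _] := Tpos; set C := `|r| / q + 1.
have C0 : 0 < C by rewrite ltr_wpDl // divr_ge0 // ltW.
have [x Tx] : exists x, C * `|x| < `|T x|.
  apply: contrapT => Tsmall; apply: Tunb; exists C => // x.
  by rewrite leNgt; apply/negP => Cx; apply: Tsmall; exists x.
set y := absv x.
have Ty : C * `|y| < `|T y|.
  by rewrite norm_absv; apply: lt_le_trans Tx (norm_le_absv (positive_op_absv x Tpos)).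
have y_gt0 : 0 < `|y|.
  rewrite normr_gt0; apply: contraTneq Ty => ->.
  by rewrite normr0 mulr0 linear_op0 // normr0 ltxx.
have s0 : 0 < q / `|y| by rewrite divr_gt0.
exists ((q / `|y|) *: y); split.
- by have := vl_scaler (ltW s0) (absv_ge0 x); rewrite scaler0.
- by rewrite normrZ gtr0_norm // divfK ?gt_eqF.
- rewrite linear_opZ // normrZ gtr0_norm //.
  have : q / `|y| * (C * `|y|) <= q / `|y| * `|T y| by rewrite ler_pM2l // ltW.
  apply: le_trans; rewrite mulrCA divfK ?gt_eqF //.
  rewrite mulrDl divfK ?gt_eqF // mul1r; apply: le_trans (ler_norm r) _.
  by rewrite lerDl ltW.
Qed.

Lemma cvg_series_geometric_bound (u : nat -> V) :
  (forall n, `|u n| <= (2^-1) ^+ n) -> cvgn (series u).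
Proof.
move=> u_small; apply: normed_cvg.
apply: (series_le_cvg (v_ := geometric 1 (2^-1))) => [n|n|n|].
- exact: normr_ge0.
- by rewrite /geometric /= mul1r exprn_ge0 // invr_ge0.
- by rewrite /geometric /= mul1r.
- by apply: is_cvg_geometric_series; rewrite gtr0_norm ?invr_gt0 // invf_lt1 // ltr1n.
Qed.

Lemma le_series (u : nat -> V) : (forall n, le 0 (u n)) ->
  forall n m, (n < m)%N -> le (u n) (series u m).
Proof.
move=> u0; have incr k : le (series u k) (series u k.+1).
  by rewrite seriesSr; have := vl_addl (series u k) (u0 k); rewrite addr0.
have series_ge0 k : le 0 (series u k).
  by have := vl_chain_mono incr (leq0n k); rewrite /series /= big_geq.
move=> n m /(vl_chain_mono incr); apply: vl_trans.
by rewrite seriesSr; have := vl_addr (u n) (series_ge0 n); rewrite add0r.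
Qed.

Lemma positive_op_bounded (T : V -> V) : positive_op le T -> bounded_op T.
Proof.
move=> Tpos; apply: contrapT => Tunb.
have witness n : exists y, [/\ le 0 y, `|y| <= (2^-1) ^+ n & n%:R <= `|T y|].
  by apply: unbounded_positive_op_witness; rewrite // exprn_gt0 // invr_gt0.
have [y Hy] := choice witness.
have y0 n : le 0 (y n) by case: (Hy n).
have /cvg_ex [l yl] : cvgn (series y).
  by apply: cvg_series_geometric_bound => n; case: (Hy n).
have Tl n : n%:R <= `|T l|.
  case: (Hy n) => _ _ /le_trans; apply; apply: norm_le_pos; first exact: Tpos.2.
  apply/positive_op_mono/(lower_bound_cvg yl (N := n.+1)) => // m.
  exact: le_series.
by have := archi_boundP (normr_ge0 (T l)); rewrite ltNge Tl.
Qed.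

End BanachLattice.

Section Filtration.
Variables (R : realType) (V : completeNormedModType R).
Variables (le : V -> V -> Prop) (join : V -> V -> V) (B : set (V -> V)).
Hypothesis HB : boolean_subalgebra le B.

Lemma boolean_subalgebra_proj (P : V -> V) : B P -> order_projection le P.
Proof. by case: HB => H _ _ _ _; apply: H. Qed.

Lemma forward_filtration_comp (p : nat -> V -> V) : forward_filtration B p ->
  forall n m, (n <= m)%N -> forall v, p n (p m v) = p n v.
Proof.
move=> [pB _ p_incr] n; elim=> [|m IH].
  by rewrite leqn0 => /eqP -> v; case: (boolean_subalgebra_proj (pB 0%N)).
rewrite leq_eqVlt => /orP [/eqP -> v | /IH pnm v].
  by case: (boolean_subalgebra_proj (pB m.+1)).
have /= pm := congr1 (fun f => f v) (p_incr m).
by rewrite -pnm pm pnm.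
Qed.

Lemma forward_filtration_Lfilt (p : nat -> V -> V) :
  forward_filtration B p -> forward_filtration B (Lfilt p).
Proof.
move=> pfilt; have [pB p0 p_incr] := pfilt; split => //.
- by case=> [|n]; apply: pB.
- case=> [|n]; apply: funext => v; rewrite /Lfilt /=.
  + exact: (forward_filtration_comp pfilt (n := 0) (m := 2)).
  + exact: (congr1 (fun f => f v) (p_incr n.+2)).
Qed.

Lemma Mb_shift (p : nat -> V -> V) x : Mb p x -> Mb (Lfilt p) (shift_s x).
Proof.
case=> px [M xM]; split; last by exists M => n; apply: xM.
by move=> n m nm; rewrite /shift_s /Lfilt /=; apply: px.
Qed.

Variable T : V -> V.
Hypothesis Tvol : volterra le B T.

Lemma volterra_proj (P : V -> V) x : B P -> P (T (P x)) = P (T x).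
Proof.
move=> BP; case: Tvol => _; apply => //.
by case: (boolean_subalgebra_proj BP).
Qed.

Lemma M0_That (p : nat -> V -> V) x : forward_filtration B p -> M0 p x -> M0 p (That p T x).
Proof.
move=> pfilt px n m nm; have [pB _ _] := pfilt.
by rewrite /That forward_filtration_comp // -(px n m nm) volterra_proj // px.
Qed.

Lemma iota_That (p : nat -> V -> V) v :
  forward_filtration B p -> iota_xi p (T v) = That p T (iota_xi p v).
Proof. by case=> pB _ _; apply: funext => k; rewrite /iota_xi /That volterra_proj. Qed.

Hypothesis VL : vector_lattice le join.
Hypothesis lattice_norm : forall x y, le (absv join x) (absv join y) -> `|x| <= `|y|.

Lemma filtration_norm (p : nat -> V -> V) n x : forward_filtration B p -> `|p n x| <= `|x|.
Proof.
by case=> pB _ _; apply: (order_projection_norm VL lattice_norm); apply: boolean_subalgebra_proj.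
Qed.

Lemma Mb_iota (p : nat -> V -> V) v : forward_filtration B p -> Mb p (iota_xi p v).
Proof.
move=> pfilt; split; first by move=> n m nm; rewrite /iota_xi forward_filtration_comp.
by exists `|v| => n; apply: filtration_norm.
Qed.

Lemma iota_continuous (p : nat -> V -> V) :
  forward_filtration B p -> E_to_seq_continuous (iota_xi p).
Proof.
move=> pfilt x e e0; exists e => // y xy n; have [pB _ _] := pfilt.
have [plin _ _] := boolean_subalgebra_proj (pB n.+1).
by rewrite /iota_xi -linear_opB //; apply: le_trans (filtration_norm _ _ pfilt) xy.
Qed.

Variable C : R.
Hypothesis C0 : 0 < C.
Hypothesis TC : forall x, `|T x| <= C * `|x|.

Lemma Mb_That (p : nat -> V -> V) x : forward_filtration B p -> Mb p x -> Mb p (That p T x).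
Proof.
move=> pfilt [px [M xM]]; split; first exact: M0_That.
exists (C * M) => n; apply: le_trans (filtration_norm _ _ pfilt) _.
by apply: le_trans (TC _) _; rewrite ler_wpM2l // ltW.
Qed.

Lemma That_continuous (p : nat -> V -> V) :
  forward_filtration B p -> seq_continuous (Mb p) (That p T).
Proof.
move=> pfilt x _ e e0; exists (e / C) => [|y _ xy n]; first by rewrite divr_gt0.
have [pB _ _] := pfilt; have [plin _ _] := boolean_subalgebra_proj (pB n.+1).
have [[Tlin _] _] := Tvol.
rewrite /That -!linear_opB //; apply: le_trans (filtration_norm _ _ pfilt) _.
apply: le_trans (TC _) _; apply: le_trans (ler_wpM2l (ltW C0) (xy n)) _.
by rewrite mulrC divfK ?gt_eqF.
Qed.

End Filtration.

Lemma cauchy_seq_cvg (R : realType) (V : completeNormedModType R) (u : nat -> V) :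
  (forall e : R, 0 < e -> exists N, forall i j, (N <= i)%N -> (N <= j)%N -> `|u i - u j| <= e) ->
  exists l : V, u @ \oo --> l.
Proof.
move=> u_cauchy; suff : cvg (u @ \oo) by move/cvg_ex.
apply: cauchy_cvg; apply/cauchyP => e e0.
have [N HN] := u_cauchy (e / 2) (divr_gt0 e0 (ltr0Sn _ 1)).
exists (u N), N => // n /= Nn; rewrite -ball_normE /=.
by apply: le_lt_trans (HN N n (leqnn N) Nn) _; rewrite ltr_pdivrMr // ltr_pMr // ltr1n.
Qed.

Lemma uniform_cauchy_cvg (R : realType) (V : completeNormedModType R) (u : nat -> nat -> V) :
  (forall e : R, 0 < e -> exists N, forall i j, (N <= i)%N -> (N <= j)%N ->
     forall n, `|u i n - u j n| <= e) ->
  exists x, forall e : R, 0 < e -> exists N, forall i, (N <= i)%N ->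
     forall n, `|u i n - x n| <= e.
Proof.
move=> u_cauchy.
have pointwise n : exists l : V, (fun k => u k n) @ \oo --> l.
  apply: cauchy_seq_cvg => e /u_cauchy [N HN].
  by exists N => i j iN jN; apply: HN.
have [x ux] := choice pointwise; exists x => e e0.
have e20 : 0 < e / 2 by rewrite divr_gt0.
have [N HN] := u_cauchy _ e20; exists N => i iN n.
have /cvgrPdist_le /(_ _ e20) [M _ HM] := ux n.
apply: le_trans (ler_distD (u (maxn N M) n) _ _) _; rewrite [e]splitr.
apply: lerD; first by apply: HN; rewrite ?leq_maxl.
by rewrite distrC; apply: HM; rewrite /= leq_maxr.
Qed.

Section SequenceSpace.
Variables (R : realType) (V : completeNormedModType R).
Variables (le : V -> V -> Prop) (join : V -> V -> V) (p : nat -> V -> V).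
Hypothesis VL : vector_lattice le join.
Hypothesis lattice_norm : forall x y, le (absv join x) (absv join y) -> `|x| <= `|y|.
Hypothesis p_proj : forall n, order_projection le (p n).

Lemma Mb_lincomb (a : R) x y : Mb p x -> Mb p y -> Mb p (fun n => a *: x n + y n).
Proof.
move=> [px [Mx xM]] [py [My yM]]; split.
  by move=> n m nm; case: (p_proj n.+1) => plin _ _; rewrite plin px // py.
exists (`|a| * Mx + My) => n; apply: le_trans (ler_normD _ _) _.
by rewrite normrZ; apply: lerD => //; apply: ler_wpM2l.
Qed.

Lemma Mb_join x y : Mb p x -> Mb p y -> Mb p (fun n => join (x n) (y n)).
Proof.
move=> [px [Mx xM]] [py [My yM]]; split.
  by move=> n m nm; rewrite (order_projection_join VL) // px // py.
by exists (Mx + My) => n; apply: le_trans (norm_join VL lattice_norm _ _) (lerD _ _).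
Qed.

Lemma Mb_uniform_limit (u : nat -> nat -> V) x : (forall k, Mb p (u k)) ->
  (forall e : R, 0 < e -> exists N, forall i, (N <= i)%N -> forall n, `|u i n - x n| <= e) ->
  Mb p x.
Proof.
move=> uMb ux; split.
  move=> n m nm; apply/eqP; rewrite -subr_eq0 -normr_le0.
  apply/ler_addgt0Pr => e e0; rewrite add0r.
  have [N HN] := ux _ (divr_gt0 e0 (ltr0Sn _ 1)); have [uN _] := uMb N.
  have [plin _ _] := p_proj n.+1.
  have -> : p n.+1 (x m) - x n = p n.+1 (x m - u N m) + (u N n - x n).
    by rewrite linear_opB // uN // addrA subrK.
  apply: le_trans (ler_normD _ _) _; rewrite [e]splitr; apply: lerD; last exact: HN.
  apply: le_trans (order_projection_norm VL lattice_norm _ (p_proj _)) _.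
  by rewrite distrC; apply: HN.
have [N HN] := ux 1 ltr01; have [_ [M uM]] := uMb N; exists (M + 1) => n.
rewrite -[x n](subKr (u N n)); apply: le_trans (ler_normB _ _) _.
by apply: lerD; [apply: uM | apply: HN].
Qed.

Lemma seq_banach_lattice_Mb : seq_banach_lattice join (Mb p).
Proof.
split; [exact: Mb_lincomb | exact: Mb_join | move=> u uMb /uniform_cauchy_cvg [x ux]].
by exists x => //; apply: Mb_uniform_limit ux.
Qed.

End SequenceSpace.

Theorem theorem4p6 (R : realType) (V : completeNormedModType R)
    (le : V -> V -> Prop) (join : V -> V -> V)
    (B : set (V -> V)) (xi : nat -> V -> V) (T : V -> V) :
  KB_space le join ->
  boolean_subalgebra le B ->
  forward_filtration B xi ->
  volterra le B T ->
  (forall x, M0 xi x -> M0 xi (That xi T x)) /\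
      (forall x, Mb xi x -> Mb xi (That xi T x)) /\
      seq_continuous (Mb xi) (That xi T) /\
      (forall x, Mb (Lfilt xi) x -> Mb (Lfilt xi) (That (Lfilt xi) T x)) /\
      seq_continuous (Mb (Lfilt xi)) (That (Lfilt xi) T) /\
      (forall v, Mb xi (iota_xi xi v)) /\
      E_to_seq_continuous (iota_xi xi) /\
      (forall v, iota_xi xi (T v) = That xi T (iota_xi xi v)) /\
      (forall x, Mb xi x -> Mb (Lfilt xi) (shift_s x)) /\
      seq_continuous (Mb xi) shift_s /\
      (forall x, Mb xi x -> shift_s (That xi T x) = That (Lfilt xi) T (shift_s x)) /\
      seq_banach_lattice join (Mb xi) /\
      seq_banach_lattice join (Mb (Lfilt xi)).
Proof.
move=> [[VL lnorm] _] HB xi_filt Tvol.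
have [C C0 TC] := positive_op_bounded VL lnorm Tvol.1.
have Lxi_filt := forward_filtration_Lfilt HB xi_filt.
have filt_proj p : forward_filtration B p -> forall n, order_projection le (p n).
  by case=> pB _ _ n; apply: (boolean_subalgebra_proj HB).
have Mb_That := Mb_That HB Tvol VL lnorm C0 TC.
have That_continuous := That_continuous HB Tvol VL lnorm C0 TC.
split; first by move=> x; apply: (M0_That HB Tvol).
split; first by move=> x; apply: Mb_That.
split; first exact: That_continuous.
split; first by move=> x; apply: Mb_That.
split; first exact: That_continuous.
split; first by move=> v; apply: (Mb_iota HB VL lnorm).
split; first exact: (iota_continuous HB VL lnorm).
split; first by move=> v; apply: (iota_That HB Tvol).
split; first by move=> x; apply: Mb_shift.
split; first by move=> x _ e e0; exists e => // y _ xy n; apply: xy.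
split; first by move=> x _; apply: funext => k; rewrite /shift_s /That /Lfilt.
by split; apply: (seq_banach_lattice_Mb VL lnorm); apply: filt_proj.
Qed.
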